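(* Let $s,t,n$ be positive integers with $1\le s\le t\le n$ and $s\mid n$. Then \[ \bigl|\overline{\mathcal{R}}(s,t,n)\bigr|\;\le\;\bigl|\mathcal{R}(s,t,n)\bigr|\;\le\;(t-s)!\cdot\left(\frac{t!}{(t-s)!}\right)^{n/s}. \]
   Context: For distinct reals $\mathbf{c}=(c_0,\dots,c_{t-1})$, let $f_{\mathbf{c}}\in S_t$ (the permutations of $\{0,\dots,t-1\}$) be given by $f_{\mathbf{c}}(i)=|\{j: c_j<c_i\}|$. For $\mathbf{c}=(c_0,\dots,c_{n-1})\in\mathbb{R}^n$ with distinct entries and $1\le t\le n$, $0\le p\le n-1$, the window $\mathbf{c}_{p,t}=(c_p,c_{p+1},\dots,c_{p+t-1})$ with indices taken modulo $n$. The $(s,t,n)$-local rank-modulation demodulation maps $\mathbf{c}$ to $\mathbf{f}_{\mathbf{c}}=(f_{\mathbf{c}_{0,t}},f_{\mathbf{c}_{s,t}},f_{\mathbf{c}_{2s,t}},\dots,f_{\mathbf{c}_{n-s,t}})$, a sequence of $n/s$ permutations in $S_t$. $\mathcal{R}(s,t,n)$ is the set of all sequences $\mathbf{f}_{\mathbf{c}}$ obtained this way from some $\mathbf{c}\in\mathbb{R}^n$ with distinct entries. For $f\in S_t$ and position $k\in\{0,\dots,t-1\}$, the factoradic digit of $f$ at position $k$ is $|\{k'>k: f(k')<f(k)\}|$; let $\bar f$ denote the vector of the digits at positions $0,1,\dots,s-1$ (the $s$ most significant factoradic digits). $\overline{\mathcal{R}}(s,t,n)$ is the set of all sequences $(\bar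 f_{\mathbf{c}_{0,t}},\bar f_{\mathbf{c}_{s,t}},\dots,\bar f_{\mathbf{c}_{n-s,t}})$ for $\mathbf{c}\in\mathbb{R}^n$ with distinct entries. *)

From HB Require Import structures.
From mathcomp Require Import all_boot all_order all_algebra.
From mathcomp Require Import boolp reals.
Set Implicit Arguments. Unset Strict Implicit. Unset Printing Implicit Defensive.
Import Order.TTheory GRing.Theory Num.Theory.

Section LRM.
Variable R : realType.

Definition rank_of (t : nat) (w : 'I_t -> R) (i : 'I_t) : nat :=
  #|[pred j : 'I_t | (w j < w i)%R]|.

Lemma rank_of_lt (t : nat) (w : 'I_t -> R) (i : 'I_t) : rank_of w i < t.
Proof.
rewrite /rank_of -[X in _ < X]card_ord; apply: proper_card.
apply/properP; split; first by apply/subsetP.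
by exists i => //=; rewrite inE ltxx.
Qed.

(* f_w in S_t, represented as its (bijective) function 'I_t -> 'I_t *)
Definition pattern (t : nat) (w : 'I_t -> R) : {ffun 'I_t -> 'I_t} :=
  [ffun i => Ordinal (rank_of_lt w i)].

Definition window (n t : nat) (c : n.-tuple R) (p : nat) : 'I_t -> R :=
  fun j => nth 0%R c ((p + j) %% n).

Definition demod (s t n : nat) (c : n.-tuple R) :
  {ffun 'I_(n %/ s) -> {ffun 'I_t -> 'I_t}} :=
  [ffun m : 'I_(n %/ s) => pattern (@window n t c (m * s))].

Definition LRM (s t n : nat) : {set {ffun 'I_(n %/ s) -> {ffun 'I_t -> 'I_t}}} :=
  [set F | `[< exists c : n.-tuple R, uniq c /\ demod s t c = F >]].

End LRM.

(* factoradic digit of f at (nat) position k : #{k' > k : f k' < f k} *)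
Definition fdigit (t : nat) (f : {ffun 'I_t -> 'I_t}) (k : nat) : nat :=
  #|[pred k' : 'I_t | (k < k') && [exists k0 : 'I_t, (val k0 == k) && (f k' < f k0)]]|.

(* the s most significant digits (positions 0..s-1); each digit is <= t,
   so inord into 'I_t.+1 is faithful *)
Definition fbar (s t : nat) (f : {ffun 'I_t -> 'I_t}) : {ffun 'I_s -> 'I_t.+1} :=
  [ffun j : 'I_s => inord (fdigit f j)].

Definition LRMbar (R : realType) (s t n : nat) :
  {set {ffun 'I_(n %/ s) -> {ffun 'I_s -> 'I_t.+1}}} :=
  [set G | `[< exists c : n.-tuple R, uniq c /\
               [ffun m => fbar s (demod s t c m)] = G >]].

From HB Require Import structures.
From mathcomp Require Import all_boot all_order all_algebra.
From mathcomp Require Import boolp reals.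
From mathcomp Require Import zify.
Set Implicit Arguments. Unset Strict Implicit. Unset Printing Implicit Defensive.
Import Order.TTheory.

(* The patterns of two consecutive windows c_{ms,t} and c_{(m+1)s,t} see the
   t - s shared entries in the same relative order.  A permutation of 'I_t is
   determined by its values on a set of positions together with the relative
   order of its values on the remaining positions (those values fill the
   complement of the known ones, in the prescribed order).  Hence a sequence in
   R(s,t,n) is determined by its first permutation (t! choices) and by the
   values of every later permutation on its last s positions (t^_s injective
   choices each), giving t! (t^_s)^(n/s - 1) = (t-s)! (t^_s)^(n/s).  The first
   inequality holds because \bar R(s,t,n) is the image of R(s,t,n). *)

Section InjectiveOrdinalMaps.
Variable n : nat.
Implicit Types (f g : 'I_n -> 'I_n) (A P : {set 'I_n}).

Lemma inj_imsetC f A : injective f -> f @: (~: A) = ~: (f @: A).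
Proof. by move=> fi; rewrite !(can2_imset_pre _ (invF_f fi) (f_invF fi)) preimsetC. Qed.

Lemma card_imset_lt f P j : injective f ->
  #|[set a in f @: P | a < f j]| = #|[set j' in P | f j' < f j]|.
Proof.
move=> fi; rewrite -[RHS](card_imset _ fi); apply: eq_card => a.
rewrite inE; apply/andP/imsetP => [[/imsetP [j' j'P ->] lt]|[j' + ->]].
  by exists j' => //; rewrite inE j'P.
by rewrite inE => /andP [j'P lt]; rewrite imset_f.
Qed.

Lemma card_lt_in_ltn A a b : a \in A -> a < b ->
  #|[set x in A | x < a]| < #|[set x in A | x < b]|.
Proof.
move=> aA ab; apply: proper_card; apply/properP; split.
  by apply/subsetP => x; rewrite !inE => /andP [-> /ltn_trans]; apply.
by exists a; rewrite !inE ?aA ?ab ?ltnn ?andbF.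
Qed.

Lemma card_lt_in_inj A a b : a \in A -> b \in A ->
  #|[set x in A | x < a]| = #|[set x in A | x < b]| -> a = b.
Proof.
move=> aA bA e; case: (ltngtP a b) => [ab|ba|/val_inj //].
  by have := card_lt_in_ltn aA ab; rewrite e ltnn.
by have := card_lt_in_ltn bA ba; rewrite e ltnn.
Qed.

(* f @: P = ~: (f @: ~: P) is determined by f off P; the order on P then fixes
   which element of f @: P each f j is. *)
Lemma eq_inj_by_order_on f g P : injective f -> injective g ->
  {in ~: P, f =1 g} -> {in P &, forall j j', (f j < f j') = (g j < g j')} ->
  f =1 g.
Proof.
move=> fi gi eq_off ord_on j.
have [jP|] := boolP (j \in P); last by rewrite -in_setC => /eq_off.
have fPgP : f @: P = g @: P.
  by apply: (can_inj (@setCK _)); rewrite -!inj_imsetC // (eq_in_imset eq_off).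
apply: (@card_lt_in_inj (f @: P)); first exact: imset_f.
  by rewrite fPgP imset_f.
rewrite {2}fPgP !card_imset_lt //; apply: eq_card => j'; rewrite !inE.
by case: (boolP (j' \in P)) => //= j'P; apply: ord_on.
Qed.

End InjectiveOrdinalMaps.

Definition shift_compatible s t (f g : {ffun 'I_t -> 'I_t}) :=
  forall i i' j j' : 'I_t, i = s + j :> nat -> i' = s + j' :> nat ->
    (f i < f i') = (g j < g j').

Lemma eq_shift_compatible s t (f g g' : {ffun 'I_t -> 'I_t}) :
  injective g -> injective g' ->
  shift_compatible s f g -> shift_compatible s f g' ->
  {in ~: [set j : 'I_t | j < t - s], g =1 g'} -> g = g'.
Proof.
move=> gi gi' fg fg' tail; apply/ffunP.
apply: (eq_inj_by_order_on gi gi' tail) => j j'; rewrite !inE => jts j'ts.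
have sj : s + j < t by lia.
have sj' : s + j' < t by lia.
by rewrite -(fg (Ordinal sj) (Ordinal sj')) // -(fg' (Ordinal sj) (Ordinal sj')).
Qed.

Definition chain_compatible s t k (F : {ffun 'I_k -> {ffun 'I_t -> 'I_t}}) :=
  (forall m, injective (F m)) /\
  (forall m1 m2 : 'I_k, m2 = m1.+1 :> nat -> shift_compatible s (F m1) (F m2)).

Lemma eq_chain_compatible s t k (F G : {ffun 'I_k.+1 -> {ffun 'I_t -> 'I_t}}) :
  chain_compatible s F -> chain_compatible s G -> F ord0 = G ord0 ->
  (forall m : 'I_k, {in ~: [set j : 'I_t | j < t - s],
                      F (lift ord0 m) =1 G (lift ord0 m)}) ->
  F = G.
Proof.
move=> [Fi Fc] [Gi Gc] eq0 tails; apply/ffunP => -[m lt_m].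
elim: m lt_m => [|m IH] lt_m; first by rewrite (_ : Ordinal lt_m = ord0) //; apply: val_inj.
have lt_m' : m < k.+1 by apply: ltnW.
have -> : Ordinal lt_m = lift ord0 (Ordinal (lt_m : m < k)) by apply: val_inj.
apply: eq_shift_compatible (Fi _) (Gi _) _ _ (tails _).
- exact: Fc (Ordinal lt_m') _ _.
- by rewrite (IH lt_m'); exact: Gc (Ordinal lt_m') _ _.
Qed.

Lemma tail_pos_proof s t (st : s <= t) (j : 'I_s) : t - s + j < t.
Proof. have := ltn_ord j; lia. Qed.

Definition tail_pos s t (st : s <= t) (j : 'I_s) : 'I_t := Ordinal (tail_pos_proof st j).

Definition tail_values s t (st : s <= t) (f : {ffun 'I_t -> 'I_t}) :
  {ffun 'I_s -> 'I_t} := [ffun j => f (tail_pos st j)].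

Lemma tail_values_inj s t (st : s <= t) (f : {ffun 'I_t -> 'I_t}) :
  injective f -> injective (tail_values st f).
Proof.
move=> fi j j'; rewrite !ffunE => /fi /(congr1 val) /= /addnI e.
exact: val_inj.
Qed.

Lemma eq_tail_values s t (st : s <= t) (f g : {ffun 'I_t -> 'I_t}) :
  tail_values st f = tail_values st g -> {in ~: [set j : 'I_t | j < t - s], f =1 g}.
Proof.
move=> e i; rewrite !inE -leqNgt => ts_i.
have i_s : i - (t - s) < s by have := ltn_ord i; lia.
have -> : i = tail_pos st (Ordinal i_s) by apply: val_inj => /=; lia.
by have /ffunP/(_ (Ordinal i_s)) := e; rewrite !ffunE.
Qed.

Lemma card_chain_compatible s t k (st : s <= t)
    (S : {set {ffun 'I_k -> {ffun 'I_t -> 'I_t}}}) :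
  0 < k -> (forall F, F \in S -> chain_compatible s F) ->
  #|S| <= t`! * (t ^_ s) ^ k.-1.
Proof.
case: k S => [|k] S // _ chainS.
pose code (F : {ffun 'I_k.+1 -> {ffun 'I_t -> 'I_t}}) :=
  (F ord0, [ffun m : 'I_k => tail_values st (F (lift ord0 m))]).
have code_inj : {in S &, injective code}.
  move=> F G FS GS [eq0 eq_tails].
  apply: eq_chain_compatible (chainS F FS) (chainS G GS) eq0 _ => m.
  by apply: eq_tail_values; have /ffunP/(_ m) := eq_tails; rewrite !ffunE.
rewrite -(card_in_imset code_inj).
pose injs T := [set f : {ffun 'I_T -> 'I_t} | injectiveb f].
apply: (@leq_trans #|setX (injs t) [set G in ffun_on (injs s)]|).
  apply/subset_leq_card/subsetP => _ /imsetP [F FS ->].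
  have [Fi _] := chainS F FS.
  rewrite inE /=; apply/andP; split; first by rewrite inE; apply/injectiveP.
  by rewrite inE; apply/ffun_onP => m; rewrite ffunE inE; apply/injectiveP/tail_values_inj.
by rewrite cardsX (cardsE (ffun_on _)) card_ffun_on !card_inj_ffuns !card_ord ffactnn.
Qed.

Section LocalRankModulation.
Variable R : realType.

Lemma rank_of_ltn t (w : 'I_t -> R) i i' : (w i < w i')%R -> rank_of w i < rank_of w i'.
Proof.
move=> lt; apply: proper_card; apply/properP; split.
  by apply/subsetP=> j; rewrite !inE => /lt_trans; apply.
by exists i; rewrite !inE ?ltxx.
Qed.

Lemma pattern_ltn t (w : 'I_t -> R) i i' : injective w ->
  (pattern w i < pattern w i') = (w i < w i')%R.
Proof.
move=> wi; rewrite !ffunE /=; apply/idP/idP; last exact: rank_of_ltn.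
case: (ltgtP (w i) (w i')) => // [gt|/wi -> //]; last by rewrite ltnn.
by move=> lt; have := rank_of_ltn gt; rewrite ltnNge (ltnW lt).
Qed.

Lemma pattern_inj t (w : 'I_t -> R) : injective w -> injective (pattern w).
Proof.
move=> wi i i' e; case: (ltgtP (w i) (w i')) => [lt|lt|/wi //].
  by have := pattern_ltn i i' wi; rewrite lt e ltnn.
by have := pattern_ltn i' i wi; rewrite lt e ltnn.
Qed.

Lemma window_inj n t (c : n.-tuple R) p :
  t <= n -> uniq c -> injective (@window R n t c p).
Proof.
move=> tn uc i i' e.
have n_gt0 : 0 < n by have := ltn_ord i; lia.
have : (p + i) %% n == (p + i') %% n.
  by rewrite -(nth_uniq 0%R _ _ uc) ?size_tuple ?ltn_pmod //; apply/eqP.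
by rewrite eqn_modDl !modn_small ?(leq_trans (ltn_ord _) tn) // => /eqP/val_inj.
Qed.

Lemma demodE s t n (c : n.-tuple R) m : demod s t c m = pattern (@window R n t c (m * s)).
Proof. by rewrite ffunE. Qed.

Lemma demod_chain_compatible s t n (c : n.-tuple R) :
  t <= n -> uniq c -> chain_compatible s (demod s t c).
Proof.
move=> tn uc; split=> [m|m1 m2 m12 i i' j j' ei ei'].
  by rewrite demodE; apply/pattern_inj/window_inj.
rewrite !demodE !pattern_ltn; try exact: window_inj.
by rewrite /window ei ei' m12 mulSn !addnA [m1 * s + s]addnC.
Qed.

Lemma LRMbar_imset s t n :
  LRMbar R s t n = [set [ffun m => fbar s (F m)]
                     | F : {ffun 'I_(n %/ s) -> {ffun 'I_t -> 'I_t}} in LRM R s t n].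
Proof.
apply/setP => G; apply/idP/imsetP.
  rewrite inE => /asboolP [c [uc <-]]; exists (demod s t c) => //.
  by rewrite inE; apply/asboolP; exists c.
move=> [F]; rewrite inE => /asboolP [c [uc <-]] ->; rewrite inE.
by apply/asboolP; exists c.
Qed.

End LocalRankModulation.

Theorem lemma1 (R : realType) (s t n : nat) :
  0 < s -> s <= t -> t <= n -> s %| n ->
  #|LRMbar R s t n| <= #|LRM R s t n| /\
  #|LRM R s t n| <= (t - s)`! * (t`! %/ (t - s)`!) ^ (n %/ s).
Proof.
move=> s_gt0 st tn _; split; first by rewrite LRMbar_imset leq_imset_card.
have k_gt0 : 0 < n %/ s by rewrite divn_gt0 // (leq_trans st tn).
have chainLRM F : F \in LRM R s t n -> chain_compatible s F.
  by rewrite inE => /asboolP [c [uc <-]]; apply: demod_chain_compatible.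
apply: leq_trans (card_chain_compatible st k_gt0 chainLRM) _.
rewrite -(ffact_factd st) -(ffact_fact st) -{2}(prednK k_gt0) expnS.
by rewrite mulnA [(t - s)`! * _]mulnC.
Qed.
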